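(* Let $k$ be a real division algebra and $a_1,\dots,a_n\in k$. Define recursively, for strings of digits (with $\wedge$ the empty string): $P[\wedge]=0$, $Q[\wedge]=1$, $P[a_n]=1$, $Q[a_n]=a_n$, and for $i<n$, $P[a_i,\dots,a_n]=Q[a_{i+1},\dots,a_n]$, $Q[a_i,\dots,a_n]=a_iQ[a_{i+1},\dots,a_n]+P[a_{i+1},\dots,a_n]$. Let $Q_n=Q[a_1,\dots,a_n]$. If $Q[a_i,\dots,a_n]\neq0$ for all $1\le i\le n$, then \[\prod_{i=0}^{n-1}\left\|T^{-1}_{a_{i+1}}\cdots T^{-1}_{a_n}0\right\|=\frac{1}{\|Q_n\|}.\]
   Context: $k\in\{\mathbb{R},\mathbb{C},\mathbb{H},\mathbb{O}\}$ with Euclidean norm $\|x\|^2=x\overline x$; $T_a^{-1}x=(x+a)^{-1}$. *)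

From Stdlib Require Import Reals List.
Import ListNotations.
Open Scope R_scope.

(* The real division algebras R, C, H, O obtained by the Cayley--Dickson
   construction: CD 0 = R, CD 1 = C, CD 2 = H, CD 3 = O. *)
Record CDalg := mkCD {
  car : Type;
  czero : car;
  cone : car;
  cadd : car -> car -> car;
  copp : car -> car;
  cmul : car -> car -> car;
  cconj : car -> car;
  cscale : R -> car -> car;
  cre : car -> R
}.

Definition CDbase : CDalg :=
  mkCD R 0 1 Rplus Ropp Rmult (fun x => x) Rmult (fun x => x).

(* (a,b)(c,d) = (ac - conj(d) b, d a + b conj(c)),  conj(a,b) = (conj a, -b) *)
Definition CDdouble (A : CDalg) : CDalg :=
  mkCD (car A * car A)
    (czero A, czero A)
    (cone A, czero A)
    (fun x y => (cadd A (fst x) (fst y), cadd A (snd x) (snd y)))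
    (fun x => (copp A (fst x), copp A (snd x)))
    (fun x y =>
       (cadd A (cmul A (fst x) (fst y)) (copp A (cmul A (cconj A (snd y)) (snd x))),
        cadd A (cmul A (snd y) (fst x)) (cmul A (snd x) (cconj A (fst y)))))
    (fun x => (cconj A (fst x), copp A (snd x)))
    (fun r x => (cscale A r (fst x), cscale A r (snd x)))
    (fun x => cre A (fst x)).

Fixpoint CD (m : nat) : CDalg :=
  match m with
  | O => CDbase
  | S m' => CDdouble (CD m')
  end.

Section Ops.
Variable A : CDalg.

Definition cnorm (x : car A) : R := sqrt (cre A (cmul A x (cconj A x))).

Definition cinv (x : car A) : car A :=
  cscale A (/ (cre A (cmul A x (cconj A x)))) (cconj A x).

Definition Tinv (a x : car A) : car A := cinv (cadd A x a).

Definition Tchain (l : list (car A)) : car A :=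
  fold_right Tinv (czero A) l.

Fixpoint PQ (l : list (car A)) : car A * car A :=
  match l with
  | [] => (czero A, cone A)
  | [an] => (cone A, an)
  | ai :: rest =>
      let pq := PQ rest in
      (snd pq, cadd A (cmul A ai (snd pq)) (fst pq))
  end.

Definition Pst (l : list (car A)) : car A := fst (PQ l).
Definition Qst (l : list (car A)) : car A := snd (PQ l).

End Ops.

(* Write t_i = T^{-1}_{a_{i+1}} ... T^{-1}_{a_n} 0 and Q_i = Q[a_{i+1}, ..., a_n].
   As for real continued fractions, t_i Q_i = P[a_{i+1}, ..., a_n] = Q_{i+1}:
   indeed (t_{i+1} + a_{i+1}) Q_{i+1} = a_{i+1} Q_{i+1} + P[a_{i+2}, ..., a_n]
   = Q_i, and t_i is the inverse of t_{i+1} + a_{i+1}.  Cancelling that inverse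
   only needs u^{-1} (u y) = y, which holds in the alternative algebras R, C, H
   and O.  Since the norm is multiplicative there, ||t_i|| ||Q_i|| = ||Q_{i+1}||
   and the product of the ||t_i|| telescopes to ||Q_n||^{-1}. *)
From Stdlib Require Import Reals List Lra Lia.
Open Scope R_scope.

Lemma map_skipn_seq_cons {T U : Type} (f : list T -> U) (a : T) (l : list T) :
  map (fun i => f (skipn i (a :: l))) (seq 0 (length (a :: l)))
  = f (a :: l) :: map (fun i => f (skipn i l)) (seq 0 (length l)).
Proof.
  cbn [length seq map skipn].
  now rewrite <- seq_shift, map_map.
Qed.

Lemma forall_skipn_cons {T : Type} (P : list T -> Prop) (a : T) (l : list T) :
  (forall i, (i < length (a :: l))%nat -> P (skipn i (a :: l))) ->
  P (a :: l) /\ (forall i, (i < length l)%nat -> P (skipn i l)).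
Proof.
  intros H; split.
  - apply (H 0%nat); cbn; lia.
  - intros i Hi; apply (H (S i)); cbn; lia.
Qed.

Definition norm2 (A : CDalg) (x : car A) : R := cre A (cmul A x (cconj A x)).

Record CDlaws (A : CDalg) : Prop := {
  norm2_mul : forall x y, norm2 A (cmul A x y) = norm2 A x * norm2 A y;
  norm2_ge0 : forall x, 0 <= norm2 A x;
  norm2_eq0 : forall x, norm2 A x = 0 -> x = czero A;
  norm2_one : norm2 A (cone A) = 1;
  conj_mulK : forall u y, cmul A (cconj A u) (cmul A u y) = cscale A (norm2 A u) y;
  scale_mull : forall s x y, cmul A (cscale A s x) y = cscale A s (cmul A x y);
  scaleA : forall s t y, cscale A s (cscale A t y) = cscale A (s * t) y;
  scale1 : forall y, cscale A 1 y = y;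
  mulDl : forall x y z, cmul A (cadd A x y) z = cadd A (cmul A x z) (cmul A y z);
  mulr1 : forall x, cmul A x (cone A) = x;
  mul0r : forall x, cmul A (czero A) x = czero A;
  addrC : forall x y, cadd A x y = cadd A y x;
  addr0 : forall x, cadd A x (czero A) = x
}.

Section Continuants.
Variable A : CDalg.
Hypothesis HA : CDlaws A.

Lemma norm2_neq0 (x : car A) : x <> czero A -> norm2 A x <> 0.
Proof. intros Hx E; apply Hx, (norm2_eq0 _ HA), E. Qed.

Lemma cinv_mulK (u y : car A) : norm2 A u <> 0 -> cmul A (cinv A u) (cmul A u y) = y.
Proof.
  intros Hu; unfold cinv; fold (norm2 A u).
  rewrite (scale_mull _ HA), (conj_mulK _ HA), (scaleA _ HA), Rinv_l by exact Hu.
  apply (scale1 _ HA).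
Qed.

Lemma cnorm_mul (x y : car A) : cnorm A (cmul A x y) = cnorm A x * cnorm A y.
Proof.
  unfold cnorm; fold (norm2 A (cmul A x y)) (norm2 A x) (norm2 A y).
  rewrite (norm2_mul _ HA); apply sqrt_mult; apply (norm2_ge0 _ HA).
Qed.

Lemma cnorm_one : cnorm A (cone A) = 1.
Proof. unfold cnorm; fold (norm2 A (cone A)); now rewrite (norm2_one _ HA), sqrt_1. Qed.

Lemma Pst_cons (a : car A) (l : list (car A)) : Pst A (a :: l) = Qst A l.
Proof. now destruct l. Qed.

Lemma Qst_cons (a : car A) (l : list (car A)) :
  Qst A (a :: l) = cadd A (cmul A a (Qst A l)) (Pst A l).
Proof.
  destruct l as [|b l]; [|reflexivity].
  cbn; now rewrite (mulr1 _ HA), (addr0 _ HA).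
Qed.

Lemma Tchain_mul_Qst (l : list (car A)) :
  (forall i, (i < length l)%nat -> Qst A (skipn i l) <> czero A) ->
  cmul A (Tchain A l) (Qst A l) = Pst A l.
Proof.
  induction l as [|a l IH]; intros Hl.
  - apply (mul0r _ HA).
  - destruct (forall_skipn_cons (fun s => Qst A s <> czero A) _ _ Hl) as [HQ Hsuff].
    cbn [Tchain fold_right]; fold (Tchain A l); unfold Tinv.
    set (t := Tchain A l) in *.
    assert (Hden : cmul A (cadd A t a) (Qst A l) = Qst A (a :: l)).
    { rewrite (mulDl _ HA), IH, Qst_cons by exact Hsuff; apply (addrC _ HA). }
    rewrite <- Hden, cinv_mulK, Pst_cons; [reflexivity|].
    intros Hz; apply (norm2_neq0 _ HQ).
    now rewrite <- Hden, (norm2_mul _ HA), Hz, Rmult_0_l.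
Qed.

Lemma cnorm_Tchain_cons (a : car A) (l : list (car A)) :
  (forall i, (i < length (a :: l))%nat -> Qst A (skipn i (a :: l)) <> czero A) ->
  cnorm A (Tchain A (a :: l)) * cnorm A (Qst A (a :: l)) = cnorm A (Qst A l).
Proof.
  intros Hl.
  now rewrite <- cnorm_mul, Tchain_mul_Qst, Pst_cons.
Qed.

Lemma prod_cnorm_Tchain_mul_cnorm_Qst (l : list (car A)) :
  (forall i, (i < length l)%nat -> Qst A (skipn i l) <> czero A) ->
  fold_right Rmult 1 (map (fun i => cnorm A (Tchain A (skipn i l))) (seq 0 (length l)))
  * cnorm A (Qst A l) = 1.
Proof.
  induction l as [|a l IH]; intros Hl.
  - cbn; rewrite cnorm_one; ring.
  - destruct (forall_skipn_cons (fun s => Qst A s <> czero A) _ _ Hl) as [_ Hsuff].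
    rewrite (map_skipn_seq_cons (fun s => cnorm A (Tchain A s))); cbn [fold_right].
    rewrite (Rmult_comm (cnorm _ _)), Rmult_assoc, cnorm_Tchain_cons by exact Hl.
    exact (IH Hsuff).
Qed.

End Continuants.

(* Each law is a polynomial identity or inequality in the real coordinates.
   Multiplicativity of the norm is what fails from the sedenions CD 4 on. *)
Lemma CD_laws (m : nat) : (m <= 3)%nat -> CDlaws (CD m).
Proof.
  intros hm; destruct m as [|[|[|[|m]]]]; [..|lia];
    split; intros; unfold norm2 in *; cbn in *;
    repeat match goal with x : prod _ _ |- _ => destruct x end;
    cbn in *; repeat match goal with |- (_, _) = (_, _) => f_equal end;
    first [ring | nra].
Qed.

Theorem lemma2p3 (m : nat) (hm : (m <= 3)%nat) (l : list (car (CD m))) :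
  (forall i : nat, (i < length l)%nat -> Qst (CD m) (skipn i l) <> czero (CD m)) ->
  fold_right Rmult 1
    (map (fun i => cnorm (CD m) (Tchain (CD m) (skipn i l))) (seq 0 (length l)))
  = 1 / cnorm (CD m) (Qst (CD m) l).
Proof.
  intros Hl.
  assert (Hprod := prod_cnorm_Tchain_mul_cnorm_Qst _ (CD_laws m hm) l Hl).
  assert (Hq : cnorm (CD m) (Qst (CD m) l) <> 0).
  { intros Hz; rewrite Hz, Rmult_0_r in Hprod; lra. }
  apply Rmult_eq_reg_r with (cnorm (CD m) (Qst (CD m) l)); [|exact Hq].
  unfold Rdiv; rewrite Rmult_1_l, Rinv_l by exact Hq.
  exact Hprod.
Qed.
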